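(* Let $n>6$ be an integer and let $x=\binom{n}{3}-2(n-2)$. Then $$[x]^3_4-1\le k_4(k_3\le x)\le [x]^3_4.$$
   Context: All graphs are finite simple graphs. For a graph $g$ and an integer $r>1$, $k_r(g)$ denotes the number of subgraphs of $g$ isomorphic to the complete graph $K_r$. For $r<s$ and a non-negative integer $x$, $k_s(k_r\le x)$ denotes the maximum of $k_s(g)$ over all graphs $g$ with $k_r(g)\le x$. The $r$-canonical representation of a non-negative integer $x$ is obtained greedily: choose $a_r$ as large as possible with $\binom{a_r}{r}\le x$, then $a_{r-1}$ as large as possible with $\binom{a_{r-1}}{r-1}\le x-\binom{a_r}{r}$, and so on, until $x=\binom{a_r}{r}+\binom{a_{r-1}}{r-1}+\dots+\binom{a_{r-j}}{r-j}$; one has $a_r>a_{r-1}>\dots>a_{r-j}$. For $r<s$, $[x]^r_s=\binom{a_r}{s}+\binom{a_{r-1}}{s-1}+\dots+\binom{a_{r-j}}{s-j}$ (replace $r$ by $s$ in the representation). A binomial coefficient whose top entry is less than its bottom entry is taken to be $0$. *)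

From mathcomp Require Import all_boot.
Set Implicit Arguments. Unset Strict Implicit. Unset Printing Implicit Defensive.

Definition simple_graph (N : nat) (e : rel 'I_N) : Prop :=
  symmetric e /\ irreflexive e.

Definition clique (N : nat) (e : rel 'I_N) (A : {set 'I_N}) : bool :=
  [forall x in A, forall y in A, (x != y) ==> e x y].

Definition kr (N : nat) (e : rel 'I_N) (r : nat) : nat :=
  #|[set A : {set 'I_N} | (#|A| == r) && clique e A]|.

Definition is_max_ks_kr (s r x m : nat) : Prop :=
  (exists N (e : rel 'I_N), simple_graph e /\ kr e r <= x /\ kr e s = m) /\
  (forall N (e : rel 'I_N), simple_graph e -> kr e r <= x -> kr e s <= m).

(* largest a with 'C(a, k) <= x (for k >= 1 such a is < x + k + 1) *)
Definition greedy_top (k x : nat) : nat :=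
  \max_(a < x + k + 1 | 'C(a, k) <= x) a.

(* r-canonical representation of x as a list of pairs (a_i, i),
   x = sum 'C(a_i, i), computed greedily, stopping when the remainder is 0. *)
Fixpoint canon (r x : nat) : seq (nat * nat) :=
  match r with
  | 0 => [::]
  | r'.+1 =>
      if x == 0 then [::]
      else let a := greedy_top r x in (a, r) :: canon r' (x - 'C(a, r))
  end.

Definition shadow_bound (r s x : nat) : nat :=
  \sum_(p <- canon r x) 'C(p.1, p.2 + (s - r)).

From mathcomp Require Import all_boot zify.
From Stdlib Require Import Classical.
Set Implicit Arguments. Unset Strict Implicit. Unset Printing Implicit Defensive.

(* Write n = m + 7.  Then x = 'C(m+6, 3) + 'C(m+3, 2) + 'C(m+2, 1) is the
   3-canonical representation of x, so [x]^3_4 = 'C(m+6, 4) + 'C(m+3, 3) +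
   'C(m+2, 2).  The 3-shadow of the family of K_4's of a graph consists of
   triangles, hence the Kruskal-Katona theorem, proved below by Frankl's
   shifting argument, gives k_4 <= [x]^3_4 whenever k_3 <= x.  Conversely,
   K_n minus two disjoint edges has exactly x triangles and
   'C(n, 4) - 2 'C(n-2, 2) + 1 = [x]^3_4 - 1 copies of K_4. *)

(** * Cascades *)

(* A list [:: a_k; a_(k-1); ...] read at level k stands for the cascade
   'C(a_k, k) + 'C(a_(k-1), k-1) + ... and its shadow
   'C(a_k, k-1) + 'C(a_(k-1), k-2) + ..., where a level-0 entry adds nothing. *)
Fixpoint cascade (k : nat) (L : seq nat) : nat :=
  if L is a :: L' then 'C(a, k) + cascade k.-1 L' else 0.

Fixpoint shadow_cascade (k : nat) (L : seq nat) : nat :=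
  if L is a :: L' then (if k is k'.+1 then 'C(a, k') else 0) + shadow_cascade k.-1 L'
  else 0.

Fixpoint cascade_valid (k ub : nat) (L : seq nat) {struct L} : bool :=
  if L is a :: L' then
    [&& k <= a, a < ub & if k is k'.+1 then cascade_valid k' a L' else L' == [::]]
  else true.

Fixpoint cascade_dec (k : nat) (L : seq nat) : seq nat :=
  if L is a :: L' then (if k < a then a.-1 :: cascade_dec k.-1 L' else [:: k]) else [::].

Lemma shadow_cascade0 L : shadow_cascade 0 L = 0.
Proof. by elim: L => //= a L ->. Qed.

Lemma shadow_cascadeE k L : size L <= k -> shadow_cascade k L = cascade k.-1 L.
Proof. by elim: L k => [|a L IH] [|k] //= sz; rewrite IH. Qed.

Lemma cascade_pascal k ub L : cascade_valid k ub L -> size L <= k ->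
  cascade k L = cascade k (map predn L) + cascade k.-1 (map predn L).
Proof.
elim: L k ub => [|a L IH] [|k] ub //= /and3P[ka _ vL] sz.
rewrite (IH k a vL sz); case: a ka {vL} => [|a] //= _.
rewrite binS; lia.
Qed.

Lemma shadow_cascade_pascal k ub L : cascade_valid k ub L -> size L <= k ->
  shadow_cascade k L =
  shadow_cascade k (map predn L) + shadow_cascade k.-1 (map predn L).
Proof.
elim: L k ub => [|a L IH] [|k] ub //= /and3P[ka _ vL] sz.
rewrite (IH k a vL sz); case: a ka {vL} => [|a] //= _.
case: k {IH sz} => [|k] /=; first by rewrite !bin0 !shadow_cascade0; lia.
rewrite binS; lia.
Qed.

Lemma cascade_dec_le k L : cascade k (cascade_dec k L) <= cascade k (map predn L) + 1.
Proof.
elim: L k => [|a L IH] k //=.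
by case: ifP => _ /=; [have := IH k.-1 | rewrite binn]; lia.
Qed.

Lemma shadow_cascade_pred_minimal k ub L : cascade_valid k ub L -> ub <= k.+1 ->
  shadow_cascade k (map predn L) <= k.
Proof.
elim: L k ub => [|a L IH] [|k] ub //=; first by rewrite shadow_cascade0.
case/and3P => ka aub vL ubk; have ea : a = k.+1 by lia.
subst a; rewrite /= binn; have := IH k k.+1 vL (leqnn _); lia.
Qed.

Lemma shadow_cascade_dec k ub L : cascade_valid k ub L -> size L <= k ->
  shadow_cascade k (map predn L) <= shadow_cascade k (cascade_dec k L).
Proof.
elim: L k ub => [|a L IH] [|k] ub //= /and3P[ka aub vL] sz.
case: ifP => ka' /=; first by have := IH k a vL sz; lia.
have ea : a = k.+1 by lia.
subst a; rewrite /= binn binSn.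
have := shadow_cascade_pred_minimal vL (leqnn _); lia.
Qed.

Lemma cascade_valid_dec k ub L : cascade_valid k ub L -> k.+1 < ub ->
  cascade_valid k ub.-1 (cascade_dec k L).
Proof.
elim: L k ub => [|a L IH] [|k] ub //=.
- case/andP => aub /eqP-> ub1.
  by case: ifP => a0 /=; apply/andP; split => //; lia.
- case/and3P => ka aub vL ub'.
  case: ifP => ka' /=; apply/and3P; split => //; try lia.
  by apply: IH.
Qed.

Lemma cascade_valid_pred k ub L : cascade_valid k.+1 ub L -> size L <= k.+1 ->
  cascade_valid k ub.-1 (map predn L).
Proof.
elim: L k ub => [|a L IH] k ub; first by case: k.
case: k => [|k] /= /and3P[ka aub vL] sz.
  by case: L {IH vL} sz => //= _; apply/andP; split => //; lia.
by apply/and3P; split; [lia | lia | exact: IH].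
Qed.

Lemma cascade_valid_widen k ub ub' L : cascade_valid k ub L -> ub <= ub' ->
  cascade_valid k ub' L.
Proof.
case: L => [|a L] //= /and3P[ka aub vL] u.
by apply/and3P; split => //; lia.
Qed.

Lemma cascade_truncate k ub L : cascade_valid k ub L ->
  exists2 L0, cascade_valid k ub L0 /\ size L0 <= k &
    cascade k L0 <= cascade k L /\ shadow_cascade k L <= shadow_cascade k L0.
Proof.
elim: L k ub => [|a L IH] k ub /=; first by exists [::]; case: k.
case: k => [|k] /=.
  by case/andP=> _ /eqP->; exists [::]; rewrite //= shadow_cascade0.
case/and3P => ka aub /IH[L0 [v0 s0] [h1 h2]].
by exists (a :: L0) => /=; [rewrite ka aub v0 | lia].
Qed.

Lemma cascade_eq0 k ub L : 0 < k -> cascade_valid k ub L -> cascade k L = 0 -> L = [::].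
Proof.
case: L => [|a L] //; case: k => [|k] //= _ /and3P[ka _ _].
have := bin_gt0 a k.+1; rewrite ka; lia.
Qed.

(** * Shadows and shifting *)

Section Shadow.
Variable T : finType.
Implicit Types (F G : {set {set T}}) (A B D : {set T}).

Definition shadow F : {set {set T}} :=
  [set B : {set T} | [exists x, (x \notin B) && (x |: B \in F)]].

Definition uniform k F := forall A, A \in F -> #|A| = k.

Lemma shadowP F B : reflect (exists2 x, x \notin B & x |: B \in F) (B \in shadow F).
Proof.
rewrite inE; apply: (iffP existsP) => [[x /andP[]]|[x]]; first by exists x.
by exists x; apply/andP.
Qed.

Lemma shadow_setD1 F A x : A \in F -> x \in A -> A :\ x \in shadow F.
Proof. by move=> AF xA; apply/shadowP; exists x; rewrite ?setD1K // !inE eqxx. Qed.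

Variable e : T.

Definition shiftable F x A := [&& x \in A, e \notin A & e |: (A :\ x) \notin F].
Definition shift F x A := if shiftable F x A then e |: (A :\ x) else A.
Definition compress F x : {set {set T}} := [set shift F x A | A in F].
Definition shifted F :=
  [forall A in F, forall x in A, (e \notin A) ==> (e |: (A :\ x) \in F)].
Definition avoid F : {set {set T}} := [set A in F | e \notin A].
Definition link F : {set {set T}} := [set A :\ e | A in [set A in F | e \in A]].

Lemma shift_inj F x : {in F &, injective (shift F x)}.
Proof.
move=> A1 A2 H1 H2; rewrite /shift.
case E1: (shiftable F x A1); case E2: (shiftable F x A2) => //.
- case/and3P: E1 => x1 e1 _; case/and3P: E2 => x2 e2 _ E.
  have h : A1 :\ x = A2 :\ x.
    rewrite -(setU1K (_ : e \notin A1 :\ x)); last by rewrite !inE (negbTE e1) andbF.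
    by rewrite E setU1K // !inE (negbTE e2) andbF.
  by rewrite -(setD1K x1) -(setD1K x2) h.
- by case/and3P: E1 => _ _ /negP nF E; rewrite E H2 in nF.
- by case/and3P: E2 => _ _ /negP nF E; rewrite -E H1 in nF.
Qed.

Lemma card_compress F x : #|compress F x| = #|F|.
Proof. exact: card_in_imset (@shift_inj F x). Qed.

Lemma uniform_compress k F x : uniform k F -> uniform k (compress F x).
Proof.
move=> uF B /imsetP[A AF ->]; rewrite /shift.
case: ifP => [/and3P[xA eA _]|_]; last exact: uF.
by rewrite cardsU1 !inE (negbTE eA) andbF /= -(uF A AF) (cardsD1 x A) xA.
Qed.

Lemma shadow_shift_moved F x A y B : x != e -> A \in F -> shiftable F x A ->
  y \notin B -> y |: B = e |: (A :\ x) -> B \in compress (shadow F) x.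
Proof.
move=> xe AF /and3P[xA eA _] yB yBE.
have [ye|ye] := eqVneq y e.
  subst y; have BA : B = A :\ x.
    by rewrite -(setU1K yB) yBE setU1K // !inE (negbTE eA) andbF.
  apply/imsetP; exists B; first by rewrite BA shadow_setD1.
  by rewrite /shift /shiftable BA !inE eqxx.
have eB : e \in B.
  have : e \in y |: B by rewrite yBE setU11.
  by rewrite !inE eq_sym (negbTE ye).
have xB : x \notin B.
  apply/negP => xB; have : x \in e |: (A :\ x) by rewrite -yBE !inE xB orbT.
  by rewrite !inE eqxx (negbTE xe).
have AxE : A :\ x = y |: (B :\ e).
  apply/setP => z; move/setP: yBE => /(_ z); rewrite !inE.
  have [->|ze] := eqVneq z e; last by rewrite /= => <-.
  by rewrite (negbTE eA) eq_sym (negbTE ye) andbF.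
have yD : y \notin x |: (B :\ e).
  have : y \in A :\ x by rewrite AxE setU11.
  by rewrite !inE negb_or (negbTE yB) andbF => /andP[-> _].
have DF : x |: (B :\ e) \in shadow F.
  by apply/shadowP; exists y; rewrite // setUCA -AxE setD1K.
have [BF|BF] := boolP (B \in shadow F).
  by apply/imsetP; exists B; rewrite // /shift /shiftable (negbTE xB).
apply/imsetP; exists (x |: (B :\ e)) => //.
have eDx : e |: ((x |: (B :\ e)) :\ x) = B.
  by rewrite setU1K ?setD1K // !inE (negbTE xB) andbF.
by rewrite /shift /shiftable eDx BF setU11 !inE eq_sym (negbTE xe) eqxx.
Qed.

Lemma shadow_shift_fixed F x A y B : x != e -> A \in F -> ~~ shiftable F x A ->
  y \notin B -> y |: B = A -> B \in compress (shadow F) x.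
Proof.
move=> xe AF nsh yB yBA; subst A.
have BF : B \in shadow F by apply/shadowP; exists y.
apply/imsetP; exists B => //; rewrite /shift.
case: ifPn => // /and3P[xB eB /negP[]].
have [ey|ey] := eqVneq e y.
  subst y; apply/shadowP; exists x; first by rewrite !inE eqxx (negbTE xe).
  by rewrite setUCA setD1K.
have eAF : e |: ((y |: B) :\ x) \in F.
  by move: nsh; rewrite /shiftable !inE xB orbT negb_or ey eB /= negbK.
apply/shadowP; exists y.
  by rewrite !inE negb_or eq_sym ey (negbTE yB) andbF.
suff -> : y |: (e |: (B :\ x)) = e |: ((y |: B) :\ x) by [].
apply/setP => z; rewrite !inE.
have [->|//] := eqVneq z y.
by rewrite /= (_ : y != x) ?orbT //; apply: contraNneq yB => ->.
Qed.

Lemma shadow_compress F x : x != e -> shadow (compress F x) \subset compress (shadow F) x.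
Proof.
move=> xe; apply/subsetP => B /shadowP[y yB /imsetP[A AF]].
rewrite /shift; case: ifPn => [sh|nsh] yBA.
  exact: shadow_shift_moved sh yB yBA.
exact: shadow_shift_fixed nsh yB yBA.
Qed.

Lemma card_avoid_compress F x A : A \in F -> shiftable F x A ->
  #|avoid (compress F x)| < #|avoid F|.
Proof.
move=> AF sh.
pose S := [set A in F | e \notin shift F x A].
have le1 : #|avoid (compress F x)| <= #|S|.
  apply: leq_trans (leq_imset_card (shift F x) S).
  apply: subset_leq_card; apply/subsetP => B.
  rewrite inE => /andP[/imsetP[A' A'F ->] eB].
  by apply: imset_f; rewrite inE A'F.
apply: leq_ltn_trans le1 (proper_card _); apply/properP; split.
  apply/subsetP => A'; rewrite !inE => /andP[-> /=]; rewrite /shift.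
  by case: ifP => [/and3P[_ ->]|].
exists A; rewrite !inE AF /=; last by rewrite /shift sh setU11.
by case/and3P: sh.
Qed.

Lemma exists_shifted k F : uniform k F ->
  exists G, [/\ uniform k G, #|G| = #|F|, #|shadow G| <= #|shadow F| & shifted G].
Proof.
have [M] := ubnP #|avoid F|; elim: M F => // M IH F avF uF.
have [sh|] := boolP (shifted F); first by exists F.
case/forallPn => A; rewrite negb_imply => /andP[AF /forallPn[x]].
rewrite negb_imply => /andP[xA]; rewrite negb_imply => /andP[eA eF].
have xe : x != e by apply: contraNneq eA => <-.
have sh : shiftable F x A by rewrite /shiftable xA eA eF.
have avF' : #|avoid (compress F x)| < M.
  exact: leq_trans (card_avoid_compress AF sh) avF.
have [G [uG cG sG shG]] := IH (compress F x) avF' (uniform_compress uF).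
exists G; split => //; first by rewrite cG card_compress.
apply: leq_trans sG _; rewrite -[#|shadow F|](card_compress (shadow F) x).
exact: subset_leq_card (shadow_compress _ xe).
Qed.

Lemma shiftedP G A x : shifted G -> A \in G -> x \in A -> e \notin A ->
  e |: (A :\ x) \in G.
Proof.
move=> /forallP/(_ A)/implyP shG AG xA eA.
by move: (shG AG) => /forallP/(_ x)/implyP/(_ xA)/implyP/(_ eA).
Qed.

Lemma mem_link G B : reflect (exists2 A, A \in G /\ e \in A & B = A :\ e) (B \in link G).
Proof.
apply: (iffP imsetP) => [[A]|[A [AG eA] ->]]; last by exists A; rewrite // inE AG.
by rewrite inE => /andP[AG eA] ->; exists A.
Qed.

Lemma notin_link G B : B \in link G -> e \notin B.
Proof. by case/mem_link => A _ ->; rewrite !inE eqxx. Qed.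

Lemma card_link G : #|link G| = #|[set A in G | e \in A]|.
Proof.
apply: card_in_imset => A1 A2; rewrite !inE => /andP[_ e1] /andP[_ e2] E.
by rewrite -(setD1K e1) -(setD1K e2) E.
Qed.

Lemma card_avoid_link G : #|G| = #|avoid G| + #|link G|.
Proof.
rewrite card_link addnC -(cardsID [set A : {set T} | e \in A] G).
by congr (_ + _); apply: eq_card => A; rewrite !inE andbC.
Qed.

Lemma uniform_avoid k G : uniform k G -> uniform k (avoid G).
Proof. by move=> uG A; rewrite inE => /andP[/uG]. Qed.

Lemma uniform_link k G : uniform k.+1 G -> uniform k (link G).
Proof.
move=> uG B /mem_link[A [AG eA] ->].
by have := cardsD1 e A; rewrite eA uG //; lia.
Qed.

Lemma shifted_shadow_avoid G : shifted G -> shadow (avoid G) \subset link G.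
Proof.
move=> shG; apply/subsetP => B /shadowP[y yB]; rewrite inE => /andP[yBG eyB].
have eB : e \notin B by move: eyB; rewrite !inE negb_or => /andP[].
have := shiftedP shG yBG (setU11 y B) eyB; rewrite setU1K // => eBG.
by apply/mem_link; exists (e |: B); rewrite ?setU1K ?setU11.
Qed.

Lemma shifted_link_gt0 k G : uniform k.+1 G -> shifted G -> G != set0 -> 0 < #|link G|.
Proof.
move=> uG shG /set0Pn[B BG]; apply/card_gt0P.
have [eB|eB] := boolP (e \in B); first by exists (B :\ e); apply/mem_link; exists B.
have /card_gt0P[x xB] : 0 < #|B| by rewrite uG.
exists (B :\ x); apply/mem_link; exists (e |: (B :\ x)).
  by rewrite setU11 shiftedP.
by rewrite setU1K // !inE (negbTE eB) andbF.
Qed.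

(* The sets [A :\ e] of the link and the sets [e |: D] for [D] in its shadow
   are disjoint families inside the shadow of [G]. *)
Lemma card_link_shadow G : #|link G| + #|shadow (link G)| <= #|shadow G|.
Proof.
have eSL D : D \in shadow (link G) -> e \notin D.
  by case/shadowP => y _ /notin_link; rewrite !inE negb_or => /andP[].
pose I := [set e |: D | D in shadow (link G)].
have cI : #|I| = #|shadow (link G)|.
  apply: card_in_imset => D1 D2 /eSL h1 /eSL h2 E.
  by rewrite -(setU1K h1) -(setU1K h2) E.
have dis : link G :&: I = set0.
  apply/setP => B; rewrite !inE; apply/negP => /andP[/notin_link eB /imsetP[D _ E]].
  by rewrite E setU11 in eB.
rewrite -cI -cardsUI dis cards0 addn0; apply: subset_leq_card.
apply/subsetP => B; rewrite inE => /orP[/mem_link[A [AG eA] ->]|/imsetP[D DS ->]].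
  exact: shadow_setD1.
case/shadowP: (DS) => y yD /mem_link[A [AG eA] E].
have yA : y \in A :\ e by rewrite -E setU11.
apply/shadowP; exists y.
  by move: yA; rewrite !inE negb_or (negbTE yD) => /andP[-> _].
by rewrite setUCA E setD1K.
Qed.

End Shadow.

(* Otherwise the part avoiding [e] would exceed the decremented cascade, and by
   induction its shadow, which lies in the link, would exceed the link. *)
Lemma link_cascade_lower (T : finType) (e : T) k (G : {set {set T}}) ub L :
  (forall (F : {set {set T}}) ub L, #|F| < #|G| -> uniform k.+1 F ->
     cascade_valid k.+1 ub L -> cascade k.+1 L <= #|F| ->
     shadow_cascade k.+1 L <= #|shadow F|) ->
  uniform k.+1 G -> shifted e G -> G != set0 ->
  cascade_valid k.+1 ub L -> size L <= k.+1 -> cascade k.+1 L <= #|G| ->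
  cascade k (map predn L) <= #|link e G|.
Proof.
move=> IHG uG shG G0 vL sL LG; rewrite leqNgt; apply/negP => small_link.
have pas : cascade k.+1 L = cascade k.+1 (map predn L) + cascade k (map predn L).
  exact: cascade_pascal vL sL.
have dec := cascade_dec_le k.+1 L.
have cG := card_avoid_link e G; have lk := shifted_link_gt0 uG shG G0.
have avG : #|avoid e G| < #|G| by lia.
have big : cascade k.+1 (cascade_dec k.+1 L) <= #|avoid e G| by lia.
have vd := cascade_valid_dec (cascade_valid_widen vL (leq_maxl ub k.+3)) (leq_maxr ub k.+3).
have := IHG _ _ _ avG (uniform_avoid uG) vd big.
have : shadow_cascade k.+1 (map predn L) = cascade k (map predn L).
  by rewrite shadow_cascadeE ?size_map.
have := shadow_cascade_dec vL sL; have := subset_leq_card (shifted_shadow_avoid shG).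
lia.
Qed.

(* Shift [F] towards an element [e] until it is [shifted]; the link of [e] is
   then large by induction on [#|F|], so its shadow is large by induction on
   [k], and [card_link_shadow] adds the two. *)
Theorem kruskal_katona (T : finType) k (F : {set {set T}}) ub L :
  uniform k F -> cascade_valid k ub L -> cascade k L <= #|F| ->
  shadow_cascade k L <= #|shadow F|.
Proof.
elim: k F ub L => [|k IHk] F ub L; first by rewrite shadow_cascade0.
have [N] := ubnP #|F|; elim: N F ub L => // N IHN F ub L FN uF vL LF.
have [L0 [v0 s0] [h1 h2]] := cascade_truncate vL.
apply: leq_trans h2 _; have {LF h1} L0F : cascade k.+1 L0 <= #|F| by lia.
have [F0|[A AF]] := set_0Vmem F.
  by move: L0F; rewrite F0 cards0 leqn0 => /eqP/(cascade_eq0 (ltn0Sn _) v0) ->.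
have /card_gt0P[e eA] : 0 < #|A| by rewrite uF.
have [G [uG cG sG shG]] := exists_shifted e uF.
apply: leq_trans sG.
have G0 : G != set0 by apply/set0Pn/card_gt0P; rewrite cG; apply/card_gt0P; exists A.
have lk : cascade k (map predn L0) <= #|link e G|.
  apply: link_cascade_lower uG shG G0 v0 s0 _; last by rewrite cG.
  by move=> F' ub' L'; rewrite cG => F'F; apply: IHN; lia.
have := IHk _ _ _ (uniform_link uG) (cascade_valid_pred v0 s0) lk.
have := card_link_shadow e G.
have -> : shadow_cascade k.+1 L0 =
    cascade k (map predn L0) + shadow_cascade k (map predn L0).
  by rewrite (shadow_cascade_pascal v0 s0) shadow_cascadeE ?size_map.
lia.
Qed.

(** * Clique counts *)

Lemma shadow_cliques N (g : rel 'I_N) r :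
  shadow [set A : {set 'I_N} | (#|A| == r.+1) && clique g A] \subset
  [set A : {set 'I_N} | (#|A| == r) && clique g A].
Proof.
apply/subsetP => B /shadowP[y yB]; rewrite !inE cardsU1 yB add1n eqSS.
case/andP => -> /forallP cl; apply/forallP => u; apply/implyP => uB.
by move: (cl u); rewrite setU1r //= => /forallP cu; apply/forallP => v;
  apply/implyP => vB; move: (cu v); rewrite setU1r.
Qed.

Lemma kr_shadow_cascade N (g : rel 'I_N) r ub L : cascade_valid r.+1 ub L ->
  cascade r.+1 L <= kr g r.+1 -> shadow_cascade r.+1 L <= kr g r.
Proof.
move=> vL Lg; apply: leq_trans (subset_leq_card (shadow_cliques g r)).
by apply: kruskal_katona vL Lg => A; rewrite inE => /andP[/eqP].
Qed.

(* Appending the term 'C(1, 1) to the cascade of the bound turns a violation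
   of the bound into a cascade lower bound for k_4. *)
Lemma kr4_le_cascade m N (g : rel 'I_N) :
  kr g 3 <= 'C(m + 6, 3) + 'C(m + 3, 2) + (m + 2) ->
  kr g 4 <= 'C(m + 6, 4) + 'C(m + 3, 3) + 'C(m + 2, 2).
Proof.
move=> k3; rewrite leqNgt; apply/negP => k4.
have vL : cascade_valid 4 (m + 7) [:: m + 6; m + 3; m + 2; 1] by rewrite /=; lia.
have := kr_shadow_cascade (g := g) vL; rewrite /= !bin1 bin0 !addn0 !addnA addn1.
by move/(_ k4); lia.
Qed.

(** * The canonical representation of x *)

Lemma greedy_topE k x a : 'C(a, k) <= x < 'C(a.+1, k) -> a < x + k + 1 ->
  greedy_top k x = a.
Proof.
move=> /andP[ax xa] a_lt; apply/eqP; rewrite eqn_leq; apply/andP; split.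
  apply/bigmax_leqP => i iC; rewrite leqNgt; apply/negP => ai.
  by have := leq_bin2l k ai; lia.
exact: (@leq_bigmax_cond _ _ _ (Ordinal a_lt)).
Qed.

Ltac bin_expand := rewrite ?addnS ?addn0 ?binS ?bin0 ?bin1.

Lemma bin3_sub_cascade m :
  'C(m + 7, 3) - 2 * (m + 7 - 2) = 'C(m + 6, 3) + 'C(m + 3, 2) + (m + 2).
Proof. bin_expand; lia. Qed.

Lemma bin4_cascade m :
  'C(m + 7, 4) + 2 = 'C(m + 6, 4) + 'C(m + 3, 3) + 'C(m + 2, 2) + 2 * 'C(m + 5, 2).
Proof. bin_expand; lia. Qed.

Lemma shadow_bound_cascade m :
  shadow_bound 3 4 ('C(m + 6, 3) + 'C(m + 3, 2) + (m + 2)) =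
  'C(m + 6, 4) + 'C(m + 3, 3) + 'C(m + 2, 2).
Proof.
set x := _ + _ + _.
have g3 : greedy_top 3 x = m + 6 by apply: greedy_topE; rewrite /x; bin_expand; lia.
have g2 : greedy_top 2 ('C(m + 3, 2) + (m + 2)) = m + 3.
  by apply: greedy_topE; bin_expand; lia.
have g1 : greedy_top 1 (m + 2) = m + 2 by apply: greedy_topE; bin_expand; lia.
have x0 : (x == 0) = false by apply/eqP; rewrite /x; bin_expand; lia.
have r3 : x - 'C(m + 6, 3) = 'C(m + 3, 2) + (m + 2) by rewrite /x; lia.
have r2 : 'C(m + 3, 2) + (m + 2) - 'C(m + 3, 2) = m + 2 by lia.
rewrite /shadow_bound /= x0 g3 r3 ifF ?g2 ?r2 ?ifF ?g1; try by apply/eqP; lia.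
by rewrite !big_cons big_nil /= addn0 !addnA.
Qed.

(** * K_n minus two disjoint edges *)

Definition supsets (T : finType) (r : nat) (P : {set T}) : {set {set T}} :=
  [set A : {set T} | (#|A| == r) && (P \subset A)].

Lemma card_supsets (T : finType) (P : {set T}) r :
  #|supsets (r + #|P|) P| = 'C(#|~: P|, r).
Proof.
have UDK (D : {set T}) : D \subset ~: P -> (P :|: D) :\: P = D.
  by move=> DP; rewrite setDUl setDv set0U; apply/setDidPl; rewrite disjoints_subset.
rewrite -cards_draws.
have -> : supsets (r + #|P|) P =
    (fun D => P :|: D) @: [set D : {set T} | D \subset ~: P & #|D| == r].
  apply/setP => A; apply/idP/imsetP.
  - rewrite inE => /andP[/eqP cA PA]; exists (A :\: P).
      by rewrite inE subsetDr cardsDS // cA addnK eqxx.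
    by apply/setP => z; rewrite !inE; case: (boolP (z \in P)) => // /(subsetP PA).
  - case=> D; rewrite inE => /andP[DP /eqP cD] ->.
    rewrite inE subsetUl andbT cardsU.
    have /disjoint_setI0-> : [disjoint P & D] by rewrite disjoint_sym disjoints_subset.
    by rewrite cards0 subn0 cD addnC.
rewrite card_in_imset // => D1 D2; rewrite !inE => /andP[D1P _] /andP[D2P _] E.
by rewrite -(UDK _ D1P) -(UDK _ D2P) E.
Qed.

Lemma card_supsets2 (T : finType) r (u v : T) : u != v ->
  #|supsets (r + 2) [set u; v]| = 'C(#|T| - 2, r).
Proof.
move=> uv; have c2 : #|[set u; v]| = 2 by rewrite cards2 uv.
have := card_supsets [set u; v] r; rewrite c2 => ->.
by congr 'C(_, r); have := cardsC [set u; v]; rewrite c2; lia.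
Qed.

Lemma subset_set2 (T : finType) (u v x y : T) (A : {set T}) : u != v ->
  u \in A -> v \in A -> u \in [set x; y] -> v \in [set x; y] -> [set x; y] \subset A.
Proof.
move=> uv uA vA; rewrite !inE => /orP[]/eqP eu /orP[]/eqP ev; subst;
  rewrite ?eqxx // in uv; by apply/subsetP => z; rewrite !inE => /orP[]/eqP->.
Qed.

Section TwoEdgesRemoved.
Variables (N : nat) (a b c d : 'I_N).
Hypotheses (ab : a != b) (cd : c != d) (ac : a != c) (ad : a != d) (bc : b != c) (bd : b != d).

Let Eab := [set a; b].
Let Ecd := [set c; d].

Definition two_edges_removed : rel 'I_N := fun i j =>
  [&& i != j, ~~ ((i \in Eab) && (j \in Eab)) & ~~ ((i \in Ecd) && (j \in Ecd))].

Lemma two_edges_removed_simple : simple_graph two_edges_removed.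
Proof.
split; last by move=> i; rewrite /two_edges_removed eqxx.
by move=> i j; rewrite /two_edges_removed eq_sym (andbC (j \in Eab)) (andbC (j \in Ecd)).
Qed.

Lemma clique_two_edges_removed (A : {set 'I_N}) :
  clique two_edges_removed A = ~~ (Eab \subset A) && ~~ (Ecd \subset A).
Proof.
apply/idP/idP.
- move/forallP => cl; apply/andP; split; apply/negP => /subsetP sub.
  + have aA : a \in A by apply: sub; rewrite !inE eqxx.
    have bA : b \in A by apply: sub; rewrite !inE eqxx orbT.
    move: (cl a); rewrite aA => /forallP/(_ b); rewrite bA ab /two_edges_removed ab.
    by rewrite !inE !eqxx orbT.
  + have cA : c \in A by apply: sub; rewrite !inE eqxx.
    have dA : d \in A by apply: sub; rewrite !inE eqxx orbT.
    move: (cl c); rewrite cA => /forallP/(_ d); rewrite dA cd /two_edges_removed cd.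
    by rewrite !inE !eqxx orbT !andbF.
- case/andP => nab ncd; apply/forallP => u; apply/implyP => uA; apply/forallP => v.
  apply/implyP => vA; apply/implyP => uv; rewrite /two_edges_removed uv /=.
  apply/andP; split; apply/negP => /andP[uE vE].
  + by move/negP: nab; apply; apply: (subset_set2 uv).
  + by move/negP: ncd; apply; apply: (subset_set2 uv).
Qed.

Lemma kr_two_edges_removed r :
  kr two_edges_removed r + #|supsets r Eab :|: supsets r Ecd| = 'C(N, r).
Proof.
have -> : 'C(N, r) = 'C(#|'I_N|, r) by rewrite card_ord.
rewrite -card_draws.
rewrite -(cardsID (supsets r Eab :|: supsets r Ecd) [set A : {set 'I_N} | #|A| == r]) addnC.
congr (_ + _); apply: eq_card => A; rewrite !inE ?clique_two_edges_removed.
  by case: (#|A| == r).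
by case: (#|A| == r); rewrite ?negb_or ?andbT.
Qed.

Lemma card_edges_removed : #|Eab :|: Ecd| = 4.
Proof.
rewrite cardsU !cards2 ab cd.
suff /disjoint_setI0-> : [disjoint Eab & Ecd] by rewrite cards0.
by rewrite -setI_eq0; apply/eqP/setP => z; rewrite !inE;
  apply/negP => /andP[/orP[]/eqP-> /orP[]/eqP zz]; move: ac ad bc bd; rewrite zz eqxx.
Qed.

Lemma kr3_two_edges_removed : kr two_edges_removed 3 = 'C(N, 3) - 2 * (N - 2).
Proof.
have := kr_two_edges_removed 3; rewrite cardsU.
have -> : supsets 3 Eab :&: supsets 3 Ecd = set0.
  apply/setP => A; rewrite !inE; apply/negP => /andP[/andP[/eqP cA s1] /andP[_ s2]].
  have : Eab :|: Ecd \subset A by rewrite subUset s1 s2.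
  by move/subset_leq_card; rewrite card_edges_removed cA.
rewrite cards0 subn0 (card_supsets2 1 ab) (card_supsets2 1 cd) card_ord bin1; lia.
Qed.

Lemma kr4_two_edges_removed :
  'C(N, 4) + 1 <= kr two_edges_removed 4 + 2 * 'C(N - 2, 2).
Proof.
have := kr_two_edges_removed 4; rewrite cardsU.
rewrite (card_supsets2 2 ab) (card_supsets2 2 cd) card_ord.
have : 0 < #|supsets 4 Eab :&: supsets 4 Ecd|.
  by apply/card_gt0P; exists (Eab :|: Ecd); rewrite !inE card_edges_removed subsetUl subsetUr.
have := subset_leq_card (subsetIl (supsets 4 Eab) (supsets 4 Ecd)).
rewrite (card_supsets2 2 ab) card_ord; lia.
Qed.
End TwoEdgesRemoved.

Lemma exists_two_edges_removed n : 3 < n -> exists g : rel 'I_n,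
  [/\ simple_graph g, kr g 3 = 'C(n, 3) - 2 * (n - 2)
    & 'C(n, 4) + 1 <= kr g 4 + 2 * 'C(n - 2, 2)].
Proof.
move=> n3; pose v i (lti : i < 4) := Ordinal (leq_trans lti n3).
exists (two_edges_removed (v 0 isT) (v 1 isT) (v 2 isT) (v 3 isT)).
split; first exact: two_edges_removed_simple.
  exact: kr3_two_edges_removed.
exact: kr4_two_edges_removed.
Qed.

Lemma exists_max_bounded (P : nat -> Prop) b : (exists v, P v) ->
  (forall v, P v -> v <= b) -> exists m, P m /\ forall v, P v -> v <= m.
Proof.
elim: b => [|b IH] [v Pv] ub.
  by exists v; split => // w /ub; rewrite leqn0 => /eqP->.
have [Pb|nPb] := classic (P b.+1); first by exists b.+1.
apply: IH; first by exists v.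
move=> w Pw; have := ub w Pw; rewrite leq_eqVlt => /orP[/eqP wb|] //.
by rewrite wb in Pw.
Qed.

Theorem theorem5 (n : nat) : 6 < n ->
  let x := 'C(n, 3) - 2 * (n - 2) in
  exists m, is_max_ks_kr 4 3 x m /\
    shadow_bound 3 4 x - 1 <= m <= shadow_bound 3 4 x.
Proof.
move=> n6; have [m ->] : exists m, n = m + 7 by exists (n - 7); lia.
have [g [sg k3 k4]] := @exists_two_edges_removed (m + 7) (ltn_addl m (isT : 3 < 7)).
move=> x; rewrite /x bin3_sub_cascade shadow_bound_cascade {x} in k3 *.
set X := _ + _ + _ in k3 *; set B := _ + _ + _.
pose P v := exists N (g : rel 'I_N), simple_graph g /\ kr g 3 <= X /\ kr g 4 = v.
have PB v : P v -> v <= B by case=> N [h [_ [h3 <-]]]; apply: kr4_le_cascade.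
have [M [PM maxM]] : exists M, P M /\ forall v, P v -> v <= M.
  by apply: exists_max_bounded PB; exists (kr g 4), _, g; rewrite k3.
exists M; split; first by split => // N h sh h3; apply: maxM; exists N, h.
have : kr g 4 <= M by apply: maxM; exists _, g; rewrite k3.
have := PB M PM; have := bin4_cascade m; rewrite (_ : m + 7 - 2 = m + 5) in k4; lia.
Qed.
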